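(* Consider the graded cluster algebra $\mathcal{A}\big((x_1,x_2,x_3),B,(1,1,2)\big)$ with $B=\begin{pmatrix}0&2&-1\\-2&0&1\\1&-1&0\end{pmatrix}$. The only degrees of cluster variables that occur are $1,-1,2,-2$.
   Context: Graded cluster algebras: for a $3\times3$ skew-symmetric integer matrix $B=(b_{ij})$ and $k\in\{1,2,3\}$, $\mu_k(B)=(b'_{ij})$ with $b'_{ij}=-b_{ij}$ if $i=k$ or $j=k$ and $b'_{ij}=b_{ij}+\operatorname{sgn}(b_{ik})\max(b_{ik}b_{kj},0)$ otherwise. A seed $((x_1,x_2,x_3),B)$ mutates in direction $k$ to $(x',\mu_k B)$ with $x'_j=x_j$ ($j\ne k$) and $x'_k=\big(\prod_{b_{ik}>0}x_i^{b_{ik}}+\prod_{b_{ik}<0}x_i^{-b_{ik}}\big)/x_k$. Cluster variables are all entries of clusters reachable by iterated mutation; $\mathcal{A}(x,B,g)$ is the algebra they generate, graded by $\deg x_i=g_i$ where $Bg=0$; under mutation at $k$ the degree vector becomes $g'$ with $g'_j=g_j$ ($j\neq k$), $g'_k=-g_k+\sum_{b_{ik}>0}b_{ik}g_i$, and every cluster variable is homogeneous of the degree recorded in any seed containing it. *)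

From Stdlib Require Import ZArith List Arith.
Import ListNotations.
Open Scope Z_scope.

(* A 3x3 integer matrix, indexed by 0,1,2. *)
Definition mat := nat -> nat -> Z.
Definition dvec := nat -> Z.

Definition mutB (B : mat) (k : nat) : mat :=
  fun i j =>
    if orb (Nat.eqb i k) (Nat.eqb j k) then - B i j
    else B i j + Z.sgn (B i k) * Z.max (B i k * B k j) 0.

(* Degree-vector mutation at k (using the matrix B before mutation):
   g'_k = -g_k + sum_{b_ik > 0} b_ik g_i, g'_j = g_j otherwise. *)
Definition mutg (B : mat) (g : dvec) (k : nat) : dvec :=
  fun j =>
    if Nat.eqb j k then
      - g k + (Z.max (B 0%nat k) 0 * g 0%nat
             + Z.max (B 1%nat k) 0 * g 1%nat
             + Z.max (B 2%nat k) 0 * g 2%nat)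
    else g j.

Definition mut_seed (s : mat * dvec) (k : nat) : mat * dvec :=
  (mutB (fst s) k, mutg (fst s) (snd s) k).

Definition mut_seq (s : mat * dvec) (ks : list nat) : mat * dvec :=
  fold_left mut_seed ks s.

Definition B0 : mat := fun i j =>
  match i, j with
  | O, S O => 2 | O, S (S O) => -1
  | S O, O => -2 | S O, S (S O) => 1
  | S (S O), O => 1 | S (S O), S O => -1
  | _, _ => 0
  end.

Definition g0 : dvec := fun i =>
  match i with O => 1 | S O => 1 | S (S O) => 2 | _ => 0 end.

(* d is the degree of some cluster variable of A((x1,x2,x3),B0,g0):
   a cluster variable is the k-th entry of a cluster reachable by a
   sequence of mutations ks, and its degree is the k-th entry of the degree
   vector of that seed. *)
Definition cluster_degree (d : Z) : Prop :=
  exists (ks : list nat) (k : nat),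
    Forall (fun i => (i < 3)%nat) ks /\ (k < 3)%nat /\
    snd (mut_seq (B0, g0) ks) k = d.

(* Mutations of graded seeds only read the entries with indices below 3, so a
   seed matters only through that block.  Up to this agreement the mutation
   class of (B, (1,1,2)) is finite: it consists of the 24 graded seeds listed
   in [mutation_class], which is closed under the three mutations, and every
   degree occurring in it is one of 1, -1, 2, -2. *)
From Stdlib Require Import ZArith List Lia.
Import ListNotations.
Open Scope Z_scope.

Notation seed := (mat * dvec)%type.

Definition seed_agree (s1 s2 : seed) : Prop :=
  (forall i j, (i < 3)%nat -> (j < 3)%nat -> fst s1 i j = fst s2 i j) /\
  (forall i, (i < 3)%nat -> snd s1 i = snd s2 i).

Lemma seed_agree_trans s1 s2 s3 :
  seed_agree s1 s2 -> seed_agree s2 s3 -> seed_agree s1 s3.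
Proof.
  intros [HB12 Hg12] [HB23 Hg23]; split; intros.
  - rewrite HB12, HB23; auto.
  - rewrite Hg12, Hg23; auto.
Qed.

Lemma mut_seed_agree s1 s2 k :
  (k < 3)%nat -> seed_agree s1 s2 -> seed_agree (mut_seed s1 k) (mut_seed s2 k).
Proof.
  destruct s1 as [B1 g1], s2 as [B2 g2]; intros Hk [HB Hg]; simpl in *; split.
  - intros i j Hi Hj; simpl; unfold mutB.
    rewrite (HB i j), (HB i k), (HB k j); auto.
  - intros i Hi; simpl; unfold mutg.
    rewrite (Hg i), (Hg k), (Hg 0%nat), (Hg 1%nat), (Hg 2%nat),
      (HB 0%nat k), (HB 1%nat k), (HB 2%nat k); auto; lia.
Qed.

Definition indices3 : list nat := [0%nat; 1%nat; 2%nat].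

Lemma In_indices3 i : (i < 3)%nat -> In i indices3.
Proof. simpl; lia. Qed.

Definition seed_agreeb (s1 s2 : seed) : bool :=
  forallb (fun i =>
    (forallb (fun j => fst s1 i j =? fst s2 i j) indices3 && (snd s1 i =? snd s2 i))%bool)
    indices3.

Lemma seed_agreeb_sound s1 s2 : seed_agreeb s1 s2 = true -> seed_agree s1 s2.
Proof.
  unfold seed_agreeb; rewrite forallb_forall; intros H; split.
  - intros i j Hi Hj.
    destruct (andb_prop _ _ (H i (In_indices3 i Hi))) as [Hrow _].
    rewrite forallb_forall in Hrow; apply Z.eqb_eq, Hrow, In_indices3, Hj.
  - intros i Hi.
    destruct (andb_prop _ _ (H i (In_indices3 i Hi))) as [_ Hdeg].
    apply Z.eqb_eq, Hdeg.
Qed.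

Definition mutation_closedb (S : list seed) : bool :=
  forallb (fun s =>
    forallb (fun k => existsb (seed_agreeb (mut_seed s k)) S) indices3) S.

Lemma existsb_seed_agreeb s S :
  existsb (seed_agreeb s) S = true -> exists s', In s' S /\ seed_agree s s'.
Proof.
  rewrite existsb_exists; intros [s' [Hs' Hagree]].
  exists s'; split; [exact Hs' | exact (seed_agreeb_sound _ _ Hagree)].
Qed.

Lemma mut_seq_in_closed_class (S : list seed) ks : forall s0,
  mutation_closedb S = true -> Forall (fun i => (i < 3)%nat) ks ->
  (exists s, In s S /\ seed_agree s0 s) ->
  exists s, In s S /\ seed_agree (mut_seq s0 ks) s.
Proof.
  induction ks as [|k ks IH]; intros s0 Hclosed Hks [s [Hs Hagree]]; simpl.
  - exists s; auto.
  - inversion Hks as [|? ? Hk Hks']; subst.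
    apply IH; auto.
    unfold mutation_closedb in Hclosed; rewrite forallb_forall in Hclosed.
    specialize (Hclosed s Hs); rewrite forallb_forall in Hclosed.
    destruct (existsb_seed_agreeb _ _ (Hclosed k (In_indices3 k Hk)))
      as [s' [Hs' Hagree']].
    exists s'; split; [exact Hs'|].
    exact (seed_agree_trans _ _ _ (mut_seed_agree _ _ _ Hk Hagree) Hagree').
Qed.

(* A skew-symmetric exchange matrix is recorded by its entries above the
   diagonal. *)
Record seed_code : Type := SeedCode
  { code01 : Z; code02 : Z; code12 : Z; deg0 : Z; deg1 : Z; deg2 : Z }.

Definition seed_of_code (c : seed_code) : seed :=
  (fun i j =>
     match i, j with
     | 0%nat, 1%nat => code01 c | 1%nat, 0%nat => - code01 c
     | 0%nat, 2%nat => code02 c | 2%nat, 0%nat => - code02 c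
     | 1%nat, 2%nat => code12 c | 2%nat, 1%nat => - code12 c
     | _, _ => 0
     end,
   fun i => match i with 0%nat => deg0 c | 1%nat => deg1 c | _ => deg2 c end).

Definition mutation_class : list seed_code :=
  [SeedCode (-2) 1 (-1) (-1) (-1) (-2); SeedCode (-2) 1 (-1) 1 1 2;
   SeedCode (-1) (-1) (-1) (-1) 1 (-1); SeedCode (-1) (-1) (-1) 1 (-1) 1;
   SeedCode (-1) (-1) 1 (-1) (-1) 1;    SeedCode (-1) (-1) 1 1 1 (-1);
   SeedCode (-1) 1 (-2) (-2) (-1) (-1); SeedCode (-1) 1 (-2) 2 1 1;
   SeedCode (-1) 1 1 (-1) 1 1;          SeedCode (-1) 1 1 1 (-1) (-1);
   SeedCode (-1) 2 (-1) (-1) (-2) (-1); SeedCode (-1) 2 (-1) 1 2 1;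
   SeedCode 1 (-2) 1 (-1) (-2) (-1);    SeedCode 1 (-2) 1 1 2 1;
   SeedCode 1 (-1) (-1) (-1) 1 1;       SeedCode 1 (-1) (-1) 1 (-1) (-1);
   SeedCode 1 (-1) 2 (-2) (-1) (-1);    SeedCode 1 (-1) 2 2 1 1;
   SeedCode 1 1 (-1) (-1) (-1) 1;       SeedCode 1 1 (-1) 1 1 (-1);
   SeedCode 1 1 1 (-1) 1 (-1);          SeedCode 1 1 1 1 (-1) 1;
   SeedCode 2 (-1) 1 (-1) (-1) (-2);    SeedCode 2 (-1) 1 1 1 2].

Definition mutation_class_seeds : list seed := map seed_of_code mutation_class.

Lemma mutation_class_closed : mutation_closedb mutation_class_seeds = true.
Proof. vm_compute; reflexivity. Qed.

Lemma initial_seed_in_mutation_class :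
  existsb (seed_agreeb (B0, g0)) mutation_class_seeds = true.
Proof. vm_compute; reflexivity. Qed.

Definition occurring_degrees : list Z := [1; -1; 2; -2].

Lemma mutation_class_degrees :
  forallb (fun s => forallb (fun i =>
    existsb (fun d => snd s i =? d) occurring_degrees) indices3) mutation_class_seeds = true.
Proof. vm_compute; reflexivity. Qed.

Lemma cluster_degree_occurring d : cluster_degree d -> In d occurring_degrees.
Proof.
  intros [ks [k [Hks [Hk <-]]]].
  destruct (mut_seq_in_closed_class _ ks (B0, g0) mutation_class_closed Hks
              (existsb_seed_agreeb _ _ initial_seed_in_mutation_class))
    as [s [Hs [_ Hdeg]]].
  rewrite (Hdeg k Hk).
  pose proof mutation_class_degrees as Hdegs; rewrite forallb_forall in Hdegs.
  specialize (Hdegs s Hs); rewrite forallb_forall in Hdegs.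
  destruct (proj1 (existsb_exists _ _) (Hdegs k (In_indices3 k Hk))) as [d' [Hd' Heq]].
  apply Z.eqb_eq in Heq; unfold dvec in *; rewrite Heq; exact Hd'.
Qed.

Theorem mainTheorem4 :
  forall d : Z, cluster_degree d <-> (d = 1 \/ d = -1 \/ d = 2 \/ d = -2).
Proof.
  intros d; split.
  - intros Hd; apply cluster_degree_occurring in Hd; simpl in Hd; intuition.
  - intros [-> | [-> | [-> | ->]]];
      [exists [], 0%nat | exists [2%nat], 2%nat | exists [], 2%nat
      | exists [2%nat; 0%nat; 1%nat], 1%nat];
      repeat split; repeat constructor; reflexivity.
Qed.
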